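(* Let $C$ be a commutative semigroup and let $I$ be an ideal of $C$ with $\mathrm{Sep}\, I\neq\emptyset$. Then $P_I$ is a congruence on $C$ such that $I$ and $\mathrm{Sep}\, I$ are $P_I$-classes of $C$, and the factor semigroup $S=C/P_I$ satisfies Condition $( * )$. Conversely, if $\alpha$ is a congruence on a commutative semigroup $C$ such that the factor semigroup $C/\alpha$ satisfies Condition $( * )$, then there is an ideal $I$ of $C$ such that $\alpha=P_I$.
   Context: For a semigroup $S$ and a subset $A\subseteq S$, the idealizer of $A$ is $\mathrm{Id}\,A=\{x\in S: xA\subseteq A,\ Ax\subseteq A\}$ (so $\mathrm{Id}\,\emptyset=S$), and the separator of $A$ is $\mathrm{Sep}\,A=\mathrm{Id}\,A\cap \mathrm{Id}(S\setminus A)$. For $H\subseteq S$ and $a\in S$, let $H\dots a=\{(x,y)\in S\times S: xay\in H\}$ (here $x,y$ range over $S$), and let $P_H=\{(a,b)\in S\times S: H\dots a=H\dots b\}$, the principal congruence on $S$ defined by $H$. For a commutative semigroup $S$ with zero $0$ and $s\in S$, the annihilator is $A(s)=\{x\in S: xs=0\}$. A semigroup $S$ satisfies Condition $( * )$ if: (1) $S$ is a commutative monoid with a zero; (2) for every non-identity element $s$ of $S$, $A(s)\neq\{0\}$; (3) for all $s,t\in S$, $A(s)=A(t)$ implies $s=t$. (A one-element semigroup satisfies Condition $( * )$.) *)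

(* A semigroup is given by a carrier type T and an operation op : T -> T -> T
   (associativity / commutativity appear as explicit hypotheses). *)

Definition associative {T : Type} (op : T -> T -> T) : Prop :=
  forall a b c, op a (op b c) = op (op a b) c.

Definition commutative {T : Type} (op : T -> T -> T) : Prop :=
  forall a b, op a b = op b a.

Definition is_ideal {T : Type} (op : T -> T -> T) (I : T -> Prop) : Prop :=
  (exists a, I a) /\
  (forall s a, I a -> I (op s a)) /\
  (forall s a, I a -> I (op a s)).

Definition Idz {T : Type} (op : T -> T -> T) (A : T -> Prop) : T -> Prop :=
  fun x => (forall a, A a -> A (op x a)) /\ (forall a, A a -> A (op a x)).

Definition Sep {T : Type} (op : T -> T -> T) (A : T -> Prop) : T -> Prop :=
  fun x => Idz op A x /\ Idz op (fun y => ~ A y) x.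

(* H..a = { (x,y) in S x S : x a y in H } *)
Definition dots {T : Type} (op : T -> T -> T) (H : T -> Prop) (a : T)
  : T -> T -> Prop :=
  fun x y => H (op (op x a) y).

Definition P {T : Type} (op : T -> T -> T) (H : T -> Prop) : T -> T -> Prop :=
  fun a b => forall x y, dots op H a x y <-> dots op H b x y.

Definition congruence {T : Type} (op : T -> T -> T) (R : T -> T -> Prop)
  : Prop :=
  (forall a, R a a) /\
  (forall a b, R a b -> R b a) /\
  (forall a b c, R a b -> R b c -> R a c) /\
  (forall a b c, R a b -> R (op c a) (op c b) /\ R (op a c) (op b c)).

Definition is_class {T : Type} (R : T -> T -> Prop) (A : T -> Prop) : Prop :=
  exists a, A a /\ forall b, A b <-> R a b.

(* Condition ( * ) for the semigroup with carrier T, operation op, where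
   equality of elements is the relation eqv.  For the factor semigroup
   C / alpha (alpha a congruence), the elements are the classes [a],
   [a][b] = [ab] and [a] = [b] iff alpha a b; so "C/alpha satisfies
   Condition ( * )" is  cond_star alpha op.
   (1) commutative monoid with a zero; (2) A(s) <> {0} for s <> e;
   (3) A(s) = A(t) implies s = t, where A(s) = { x : x s = 0 }. *)
Definition cond_star {T : Type} (eqv : T -> T -> Prop) (op : T -> T -> T)
  : Prop :=
  (forall a b c, eqv (op a (op b c)) (op (op a b) c)) /\
  (forall a b, eqv (op a b) (op b a)) /\
  exists e z : T,
    (forall a, eqv (op e a) a /\ eqv (op a e) a) /\
    (forall a, eqv (op z a) z /\ eqv (op a z) z) /\
    (forall s, ~ eqv s e ->
       ~ (forall x, eqv (op x s) z <-> eqv x z)) /\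
    (forall s t, (forall x, eqv (op x s) z <-> eqv (op x t) z) -> eqv s t).

Definition factor_cond_star {T : Type} (op : T -> T -> T)
  (alpha : T -> T -> Prop) : Prop := cond_star alpha op.

(** An element [s] of [Sep I] is invisible to membership in [I]: [sz ∈ I] iff [z ∈ I].
    So [I] is the [P_I]-class on which every context test [xay ∈ I] succeeds, the class of
    [s] is an identity of [C/P_I], the class of [I] a zero, and the annihilator of [[a]] is
    [{[x] : xa ∈ I}], which determines [a] modulo [P_I].  Conversely, under Condition ( * )
    take [I] to be the zero class: separation of annihilators says [alpha a b] iff
    [xa ∈ I ⇔ xb ∈ I] for all [x], and multiplying by the identity shows this is [P_I]. *)

From Stdlib Require Import Classical Setoid.

Section Separator.

Variables (C : Type) (op : C -> C -> C) (I : C -> Prop).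

Lemma Sep_mull s z : Sep op I s -> I (op s z) <-> I z.
Proof.
  intros [[HI _] [HnI _]]; split; intro Hz.
  - apply NNPP; intro Hnz; exact (HnI z Hnz Hz).
  - exact (HI z Hz).
Qed.

Lemma Sep_mulr s z : Sep op I s -> I (op z s) <-> I z.
Proof.
  intros [[_ HI] [_ HnI]]; split; intro Hz.
  - apply NNPP; intro Hnz; exact (HnI z Hnz Hz).
  - exact (HI z Hz).
Qed.

Lemma dots_ideal b x y : is_ideal op I -> I b -> dots op I b x y.
Proof. intros [_ [HL HR]] Hb; apply HR, HL, Hb. Qed.

Lemma P_ideal_iff a b :
  is_ideal op I -> (exists s, Sep op I s) -> I a -> P op I a b <-> I b.
Proof.
  intros HI [s Hs] Ha; split.
  - intro Hab.
    assert (Hsbs : dots op I b s s) by (apply Hab, dots_ideal; assumption).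
    unfold dots in Hsbs.
    now rewrite (Sep_mulr _ _ Hs), (Sep_mull _ _ Hs) in Hsbs.
  - intros Hb x y; split; intros _; apply dots_ideal; assumption.
Qed.

Hypothesis op_comm : commutative op.

Lemma Sep_ideal_iff t :
  is_ideal op I -> Sep op I t <-> forall x, I (op x t) <-> I x.
Proof.
  intros [_ [HL HR]]; split.
  - intros Ht x; apply Sep_mulr, Ht.
  - intro Ht; split; split.
    + intros a Ha; apply HL, Ha.
    + intros a Ha; apply HR, Ha.
    + intros a Hna Hta; rewrite op_comm, Ht in Hta; exact (Hna Hta).
    + intros a Hna Hat; rewrite Ht in Hat; exact (Hna Hat).
Qed.

Hypothesis op_assoc : associative op.

Lemma dots_comm a x y : dots op I a x y <-> I (op (op y x) a).
Proof. unfold dots; rewrite op_comm, op_assoc; reflexivity. Qed.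

Lemma dots_Sep s x y : Sep op I s -> dots op I s x y <-> I (op x y).
Proof.
  intro Hs; unfold dots.
  rewrite (op_comm x s), <- op_assoc; apply Sep_mull, Hs.
Qed.

Lemma P_Sep_mull s a : Sep op I s -> P op I (op s a) a.
Proof.
  intros Hs x y; unfold dots.
  rewrite op_assoc, (op_comm x s), <- (op_assoc s x a), <- (op_assoc s _ y).
  apply Sep_mull, Hs.
Qed.

Lemma P_Sep_iff s b :
  is_ideal op I -> Sep op I s -> P op I s b <-> Sep op I b.
Proof.
  intros HI Hs; split.
  - intro Hsb; apply Sep_ideal_iff; [exact HI|]; intro x; split.
    + intro Hxb.
      assert (Hxss : dots op I s x s)
        by (apply Hsb; unfold dots; apply HI, Hxb).
      unfold dots in Hxss.
      now rewrite !(Sep_mulr _ _ Hs) in Hxss.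
    + intro Hx; apply HI, Hx.
  - intros Hb x y; rewrite (dots_Sep _ _ _ Hs), (dots_Sep _ _ _ Hb); reflexivity.
Qed.

End Separator.

Lemma P_congruence {C : Type} (op : C -> C -> C) (H : C -> Prop) :
  associative op -> congruence op (P op H).
Proof.
  intro op_assoc; split; [|split; [|split]].
  - intros a x y; reflexivity.
  - intros a b Hab x y; symmetry; apply Hab.
  - intros a b c Hab Hbc x y; rewrite (Hab x y); apply Hbc.
  - intros a b c Hab; split; intros x y; unfold dots.
    + rewrite !(op_assoc x c); apply (Hab (op x c) y).
    + assert (Hshift : forall u, op (op x (op u c)) y = op (op x u) (op c y))
        by (intro u; rewrite !op_assoc; reflexivity).
      rewrite !Hshift; apply (Hab x (op c y)).
Qed.

Lemma factor_cond_star_P {C : Type} (op : C -> C -> C) (I : C -> Prop) :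
  associative op -> commutative op -> is_ideal op I -> (exists s, Sep op I s) ->
  factor_cond_star op (P op I).
Proof.
  intros op_assoc op_comm HI HSep.
  pose proof HSep as [s Hs]; pose proof HI as [[z Hz] [HL HR]].
  pose proof (P_congruence op I op_assoc) as [_ [HPsym _]].
  assert (Hann : forall w, P op I w z <-> I w).
  { intro w; rewrite <- (P_ideal_iff C op I z w HI HSep Hz); split; apply HPsym. }
  split; [|split].
  - intros a b c; rewrite op_assoc; intros x y; reflexivity.
  - intros a b; rewrite op_comm; intros x y; reflexivity.
  - exists s, z; split; [|split; [|split]].
    + intro a; split; [|rewrite op_comm]; apply P_Sep_mull; assumption.
    + intro a; split; apply Hann; [apply HR|apply HL]; exact Hz.
    + intros t Hnt Hannt; apply Hnt.
      apply HPsym, (P_Sep_iff C op I op_comm op_assoc s t HI Hs).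
      apply (Sep_ideal_iff C op I op_comm t HI); intro x.
      rewrite <- (Hann (op x t)), <- (Hann x); apply Hannt.
    + intros u v Huv x y.
      rewrite !(dots_comm _ _ _ op_comm op_assoc), <- !Hann; apply Huv.
Qed.

Lemma congruence_eq_P_zero_class {C : Type} (op : C -> C -> C)
    (alpha : C -> C -> Prop) (e z : C) :
  congruence op alpha ->
  (forall a, alpha (op a e) a) ->
  (forall a, alpha (op z a) z /\ alpha (op a z) z) ->
  (forall s t, (forall x, alpha (op x s) z <-> alpha (op x t) z) -> alpha s t) ->
  is_ideal op (fun w => alpha w z) /\ (forall a b, alpha a b <-> P op (fun w => alpha w z) a b).
Proof.
  intros [Hrefl [Hsym [Htrans Hcompat]]] He Hz Hsep.
  assert (Hclass : forall u v, alpha u v -> alpha u z <-> alpha v z)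
    by (intros u v Huv; split; eauto).
  split; [split; [exists z; apply Hrefl|split]|].
  - intros s a Ha; eapply Htrans; [apply (Hcompat _ _ s Ha)|apply Hz].
  - intros s a Ha; eapply Htrans; [apply (Hcompat _ _ s Ha)|apply Hz].
  - intros a b; split.
    + intros Hab x y; unfold dots; apply Hclass.
      apply (Hcompat _ _ y (proj1 (Hcompat _ _ x Hab))).
    + intro Hab; apply Hsep; intro x.
      rewrite <- (Hclass _ _ (He (op x a))), <- (Hclass _ _ (He (op x b))).
      apply Hab.
Qed.

Theorem theorem1 :
  (forall (C : Type) (op : C -> C -> C),
     associative op -> commutative op ->
     forall I : C -> Prop,
       is_ideal op I ->
       (exists x, Sep op I x) ->
       congruence op (P op I) /\
       is_class (P op I) I /\
       is_class (P op I) (Sep op I) /\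
       factor_cond_star op (P op I)) /\
  (forall (C : Type) (op : C -> C -> C),
     associative op -> commutative op ->
     forall alpha : C -> C -> Prop,
       congruence op alpha ->
       factor_cond_star op alpha ->
       exists I : C -> Prop,
         is_ideal op I /\ (forall a b, alpha a b <-> P op I a b)).
Proof.
  split.
  - intros C op op_assoc op_comm I HI HSep.
    split; [apply P_congruence, op_assoc|split; [|split]].
    + pose proof HI as [[a Ha] _].
      exists a; split; [exact Ha|].
      intro b; symmetry; apply P_ideal_iff; assumption.
    + destruct HSep as [s Hs].
      exists s; split; [exact Hs|].
      intro b; symmetry; apply P_Sep_iff; assumption.
    + apply factor_cond_star_P; assumption.
  - intros C op _ _ alpha Halpha [_ [_ [e [z [He [Hz [_ Hsep]]]]]]].
    exists (fun w => alpha w z).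
    apply (congruence_eq_P_zero_class op alpha e z); auto.
    intro a; apply He.
Qed.
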